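(* There exist ten IGL environments $E_0,\dots,E_9$ with the following properties. All share the same context space $\mathcal X$, context distribution $d_0$, action set $\mathcal A=\{0,\dots,9\}$ and reward: there is a labeling $\ell:\mathcal X\to\{0,\dots,9\}$ with $\Pr_{x\sim d_0}[\ell(x)=j]=1/10$ for each $j$, and $r=\mathbf 1\{a=\ell(x)\}$. The feedback space is a disjoint union $\mathcal Y=\mathcal Y_0\sqcup\dots\sqcup\mathcal Y_9$ with a probability distribution $\nu_j$ on each $\mathcal Y_j$; in environment $E_i$, $y\mid r=1\sim\nu_i$ and $y\mid r=0\sim\frac19\sum_{j\ne i}\nu_j$, independently of $(x,a)$. Then: (i) each $E_i$ satisfies Assumption 1, and, with $\Pi$ the class of all policies, $\pi_u$ the uniform policy and any decoder class $\Psi$ containing the indicators $\mathbf 1_{\mathcal Y_0},\dots,\mathbf 1_{\mathcal Y_9}$, Assumption 2 holds (e.g. with $\eta=0.8$); (ii) when actions are chosen by $\pi_u$, the marginal distribution of $y$ is the same ($\frac1{10}\sum_j\nu_j$) in all ten environments; (iii) for every decoder $\psi:\mathcal Y\to[0,1]$ (the same decoder being used in all environments, as any method depending only on the marginal law of $y$ must do), there exists $i\in\{0,\dots,9\}$ and a policy $\hat\pi$ that maximizes the decoded reward $V_i(\pi,\psi)$ over all policies in environment $E_i$ and satisfies $V_i(\hat\pi)=0$, while $\max_\pi V_i(\pi)=1$; hence $V_i(\pi^\star)-V_i(\hat\pi)=\Omega(1)$.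
   Context: IGL setting: contexts $x\sim d_0$, finite action set, latent reward $r\in\{0,1\}$ and feedback $y$ drawn given $(x,a)$; for environment $E_i$, $V_i(\pi)=\mathbb E_{x\sim d_0,a\sim\pi(\cdot|x)}[r]$ and $V_i(\pi,\psi)=\mathbb E_{x\sim d_0,a\sim\pi(\cdot|x)}[\psi(y)]$ computed in $E_i$. Assumption 1 (conditional independence): there are distributions $Q_0,Q_1$ on $\mathcal Y$ with $y\mid(x,a,r)\sim Q_r$; $\Delta\psi:=\mathbb E_{Q_1}[\psi]-\mathbb E_{Q_0}[\psi]$. Assumption 2 (identifiability): with $\pi^\star\in\arg\max_{\pi\in\Pi}V(\pi)$ and $\psi^\star\in\arg\max_{\psi\in\Psi}\Delta\psi$, there is $\eta>0$ with $(V(\pi^\star)-V(\pi_u))\Delta\psi^\star\ge V(\pi_u)+\eta$, where $\pi_u$ is the uniform policy. *)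

From mathcomp Require Import all_boot all_order all_algebra.
Set Implicit Arguments. Unset Strict Implicit. Unset Printing Implicit Defensive.
Import Order.TTheory GRing.Theory Num.Theory.
Local Open Scope ring_scope.

Section IGL.
Variables (R : realFieldType) (X A Y : finType).

(* A (finite) IGL environment:
   ctx x        = d_0(x)
   rwd x a      = P[r = 1 | x, a]
   fbk x a r y  = P[y | x, a, r]                                      *)
Record igl_env := IGLEnv {
  ctx : X -> R;
  rwd : X -> A -> R;
  fbk : X -> A -> bool -> Y -> R }.

Definition is_dist (T : finType) (p : T -> R) :=
  (forall t, 0 <= p t) /\ \sum_t p t = 1.

Definition well_formed (E : igl_env) :=
  [/\ is_dist (ctx E), (forall x a, 0 <= rwd E x a <= 1)
    & forall x a r, is_dist (fbk E x a r)].

Definition is_policy (pi : X -> A -> R) := forall x, is_dist (pi x).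

Definition unif_policy : X -> A -> R := fun _ _ => (#|A|%:R)^-1.

Definition rprob (E : igl_env) x a (r : bool) : R :=
  if r then rwd E x a else 1 - rwd E x a.

Definition value (E : igl_env) (pi : X -> A -> R) : R :=
  \sum_x ctx E x * \sum_a pi x a * rwd E x a.

Definition dvalue (E : igl_env) (pi : X -> A -> R) (psi : Y -> R) : R :=
  \sum_x ctx E x * \sum_a pi x a *
    \sum_(r : bool) rprob E x a r * \sum_y fbk E x a r y * psi y.

Definition ymarginal (E : igl_env) (pi : X -> A -> R) (y : Y) : R :=
  \sum_x ctx E x * \sum_a pi x a *
    \sum_(r : bool) rprob E x a r * fbk E x a r y.

Definition assumption1 (E : igl_env) (Q : bool -> Y -> R) :=
  (forall r, is_dist (Q r)) /\
  (forall x a r y, 0 < ctx E x -> 0 < rprob E x a r -> fbk E x a r y = Q r y).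

Definition Delta (Q : bool -> Y -> R) (psi : Y -> R) : R :=
  \sum_y Q true y * psi y - \sum_y Q false y * psi y.

Definition assumption2_with (E : igl_env) (Q : bool -> Y -> R)
    (Psi : (Y -> R) -> Prop) (eta : R) :=
  forall pistar, is_policy pistar ->
    (forall pi, is_policy pi -> value E pi <= value E pistar) ->
  forall psistar, Psi psistar ->
    (forall psi, Psi psi -> Delta Q psi <= Delta Q psistar) ->
  value E unif_policy + eta <=
    (value E pistar - value E unif_policy) * Delta Q psistar.

Definition assumption2 (E : igl_env) (Q : bool -> Y -> R)
    (Psi : (Y -> R) -> Prop) :=
  exists eta, 0 < eta /\ assumption2_with E Q Psi eta.

End IGL.

Definition mk_env (R : realFieldType) (X Y : finType) (d0 : X -> R)
    (ell : X -> 'I_10) (nu : 'I_10 -> Y -> R) (i : 'I_10)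
    : igl_env R X (ordinal 10) Y :=
  IGLEnv d0 (fun x a => (a == ell x)%:R)
    (fun x a (r : bool) y =>
       if r then nu i y else (9%:R)^-1 * \sum_(j < 10 | j != i) nu j y).

(* indicator of the block Y_j of the disjoint union *)
Definition block_ind (R : realFieldType) (Y : finType) (blk : Y -> 'I_10)
    (j : 'I_10) : Y -> R := fun y => (blk y == j)%:R.

From mathcomp Require Import all_boot all_order all_algebra.
From mathcomp Require Import lra.
Import Order.TTheory GRing.Theory Num.Theory.
Set Implicit Arguments. Unset Strict Implicit. Unset Printing Implicit Defensive.
Local Open Scope ring_scope.

(* Everything except the choice of witnesses holds for an
   arbitrary context law d0, labeling ell, block map blk and block
   distributions nu_j supported on the blocks Y_j; the theorem instantiates
   this with ten contexts, ten feedback symbols, ell = blk = id and point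
   masses nu_j.
   In E_i the reward is the indicator 1{a = ell x}, so averaging over the
   latent reward just evaluates at r = 1{a = ell x} (rprob_env); hence
   V_i(pi) is the mass pi puts on the label, and the decoded reward of an
   action is m_i := E_{nu_i}[psi] on the label and the mean of the other
   m_j off the label.  Consequences:
   - the feedback law is the same for every (x,a), giving Assumption 1; the
     block indicator of Y_i has gap Delta = 1 and the oracle policy has
     value 1, giving Assumption 2 with eta = 4/5;
   - under the uniform policy, y ~ nu_i w.p. 1/10 and ~ the mean of the
     other nine w.p. 9/10, i.e. y ~ (1/10) sum_j nu_j in every E_i;
   - for i minimising m_i, always playing a wrong label maximises the
     decoded reward, while its true value is 0. *)

Section Distributions.
Variables (R : realFieldType) (T : finType).

Lemma dist_le1 (p : T -> R) (t : T) : is_dist p -> p t <= 1.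
Proof. by case=> p_ge0 <-; rewrite (bigD1 t) //= lerDl sumr_ge0. Qed.

Lemma expect_cst (p : T -> R) (c : R) : is_dist p -> \sum_t p t * c = c.
Proof. by case=> _ p1; rewrite -mulr_suml p1 mul1r. Qed.

Lemma expect_le (p : T -> R) (f : T -> R) (c : R) :
  is_dist p -> (forall t, f t <= c) -> \sum_t p t * f t <= c.
Proof.
move=> p_dist f_le; rewrite -[leRHS](expect_cst c p_dist).
by apply: ler_sum => t _; rewrite ler_wpM2l //; case: p_dist.
Qed.

Lemma sum_pointmass (k : T) (f : T -> R) : \sum_t f t * (t == k)%:R = f k.
Proof.
rewrite (bigD1 k) //= eqxx mulr1 big1 ?addr0 // => t /negbTE ->.
exact: mulr0.
Qed.

Lemma pointmass_dist (k : T) : is_dist (fun t => (t == k)%:R : R).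
Proof.
split=> [t|]; first exact: ler0n.
by under eq_bigr do rewrite -[_%:R]mul1r; rewrite sum_pointmass.
Qed.

Lemma uniform_dist : (0 < #|T|)%N -> is_dist (fun _ : T => (#|T|%:R)^-1 : R).
Proof.
move=> T_gt0; split=> [t|]; first by rewrite invr_ge0 ler0n.
by rewrite sumr_const -[_ *+ _]mulr_natr mulVf // pnatr_eq0 -lt0n.
Qed.

End Distributions.

Definition det_policy (R : realFieldType) (X A : finType) (f : X -> A) :
  X -> A -> R := fun x a => (a == f x)%:R.

Lemma det_policy_is_policy (R : realFieldType) (X A : finType) (f : X -> A) :
  is_policy (det_policy R f).
Proof. by move=> x; apply: pointmass_dist. Qed.

Section TenActions.
Variable R : realFieldType.

Lemma sum_others_const (i : 'I_10) (c : R) : \sum_(j < 10 | j != i) c = 9%:R * c.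
Proof.
rewrite [LHS](_ : _ = \sum_(j < 10) c - c); last first.
  by rewrite [in RHS](bigD1 i) //= addrAC subrr add0r.
by rewrite sumr_const card_ord mulrSr addrK mulr_natl.
Qed.

Lemma sum_actions (k : 'I_10) (G : bool -> R) :
  \sum_(a < 10) G (a == k) = G true + 9%:R * G false.
Proof.
rewrite (bigD1 k) //= eqxx -(sum_others_const k); congr (_ + _).
by apply: eq_bigr => a /negbTE ->.
Qed.

Definition wrong_action (k : 'I_10) : 'I_10 := lift k ord0.

Lemma wrong_action_neq (k : 'I_10) : (k == wrong_action k) = false.
Proof. exact/negbTE/neq_lift. Qed.

End TenActions.

Section TenEnvironments.
Variables (R : realFieldType) (X Y : finType).
Variables (d0 : X -> R) (ell : X -> 'I_10) (blk : Y -> 'I_10) (nu : 'I_10 -> Y -> R).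
Hypothesis d0_dist : is_dist d0.
Hypothesis nu_dist : forall j, is_dist (nu j).
Hypothesis nu_block : forall j y, nu j y != 0 -> blk y = j.

Local Notation E := (mk_env d0 ell nu).

Definition mix_others (i : 'I_10) (y : Y) : R :=
  (9%:R)^-1 * \sum_(j < 10 | j != i) nu j y.

Definition feedback_law (i : 'I_10) (r : bool) : Y -> R :=
  if r then nu i else mix_others i.

Definition nu_mean (j : 'I_10) (psi : Y -> R) : R := \sum_y nu j y * psi y.

Definition decoded (i : 'I_10) (psi : Y -> R) (r : bool) : R :=
  \sum_y feedback_law i r y * psi y.

Lemma fbk_env (i : 'I_10) x a (r : bool) : fbk (E i) x a r = feedback_law i r.
Proof. by case: r. Qed.

Lemma mix_others_dist (i : 'I_10) : is_dist (mix_others i).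
Proof.
split=> [y|].
  by rewrite mulr_ge0 ?invr_ge0 ?ler0n ?sumr_ge0 // => j _; case: (nu_dist j).
rewrite -mulr_sumr exchange_big /=.
under eq_bigr => j _ do case: (nu_dist j) => _ ->.
by rewrite sum_others_const mulr1 mulVf // pnatr_eq0.
Qed.

Lemma env_well_formed (i : 'I_10) : well_formed (E i).
Proof.
split=> // [x a /= | x a [] /=]; [| exact: nu_dist | exact: mix_others_dist].
by case: (a == ell x); rewrite /= ?lexx ?ler01.
Qed.

Lemma env_assumption1 (i : 'I_10) : assumption1 (E i) (feedback_law i).
Proof.
split=> [[] | x a r y _ _]; rewrite ?fbk_env //.
- exact: nu_dist.
- exact: mix_others_dist.
Qed.

Lemma rprob_env (i : 'I_10) x a (F : bool -> R) :
  \sum_(r : bool) rprob (E i) x a r * F r = F (a == ell x).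
Proof.
rewrite big_bool /=; case: (a == ell x);
  by rewrite /= ?subrr ?subr0 mul0r ?mul1r ?addr0 ?add0r.
Qed.

Lemma value_env (i : 'I_10) (pi : X -> 'I_10 -> R) :
  value (E i) pi = \sum_x d0 x * pi x (ell x).
Proof. by apply: eq_bigr => x _; rewrite /= sum_pointmass. Qed.

Lemma dvalue_env (i : 'I_10) (pi : X -> 'I_10 -> R) (psi : Y -> R) :
  dvalue (E i) pi psi = \sum_x d0 x * \sum_a pi x a * decoded i psi (a == ell x).
Proof.
apply: eq_bigr => x _; congr (_ * _); apply: eq_bigr => a _; congr (_ * _).
by under eq_bigr do rewrite fbk_env; rewrite (rprob_env i x a (decoded i psi)).
Qed.

Lemma value_le1 (i : 'I_10) (pi : X -> 'I_10 -> R) :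
  is_policy pi -> value (E i) pi <= 1.
Proof. by move=> pi_pol; rewrite value_env expect_le // => x; apply: dist_le1. Qed.

Lemma value_det (i : 'I_10) (f : X -> 'I_10) :
  value (E i) (det_policy R f) = \sum_x d0 x * (ell x == f x)%:R.
Proof. exact: value_env. Qed.

Lemma value_oracle (i : 'I_10) : value (E i) (det_policy R ell) = 1.
Proof.
by rewrite value_det; under eq_bigr do rewrite eqxx; rewrite expect_cst.
Qed.

Lemma value_unif (i : 'I_10) :
  value (E i) (@unif_policy R X 'I_10) = (10%:R)^-1.
Proof. by rewrite value_env /unif_policy card_ord expect_cst. Qed.

Lemma block_mass (j k : 'I_10) : nu_mean j (block_ind R blk k) = (j == k)%:R.
Proof.
rewrite -[RHS](expect_cst _ (nu_dist j)); apply: eq_bigr => y _.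
by rewrite /block_ind; have [->|/nu_block ->] := eqVneq (nu j y) 0; rewrite ?mul0r.
Qed.

Lemma decoded_true (i : 'I_10) (psi : Y -> R) : decoded i psi true = nu_mean i psi.
Proof. by []. Qed.

Lemma decoded_false (i : 'I_10) (psi : Y -> R) :
  decoded i psi false = (9%:R)^-1 * \sum_(j < 10 | j != i) nu_mean j psi.
Proof.
rewrite /decoded /= /mix_others.
under eq_bigr do rewrite -mulrA mulr_suml.
by rewrite -mulr_sumr exchange_big.
Qed.

Lemma Delta_block (i : 'I_10) : Delta (feedback_law i) (block_ind R blk i) = 1.
Proof.
rewrite /Delta -!/(decoded _ _ _) decoded_true decoded_false block_mass eqxx.
rewrite big1 ?mulr0 ?subr0 // => j /negbTE.
by rewrite block_mass => ->.
Qed.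

(* Assumption 2 holds with eta = 4/5: an optimal policy has value 1, the
   uniform one has value 1/10 and an optimal decoder has gap at least 1,
   so the product in Assumption 2 is at least 9/10 = 1/10 + 4/5. *)
Lemma env_assumption2 (i : 'I_10) (Psi : (Y -> R) -> Prop) :
  Psi (block_ind R blk i) ->
  assumption2_with (E i) (feedback_law i) Psi (4%:R / 5%:R).
Proof.
move=> Psi_i pistar _ pistar_opt psistar _ psistar_opt.
have V_ge1 : 1 <= value (E i) pistar.
  by rewrite -(value_oracle i) pistar_opt //; apply: det_policy_is_policy.
have D_ge1 : 1 <= Delta (feedback_law i) psistar.
  by rewrite -(Delta_block i) psistar_opt.
rewrite value_unif.
set V := value _ _ in V_ge1 *; set D := Delta _ _ in D_ge1 *.
nra.
Qed.

Lemma ymarginal_unif (i : 'I_10) (y : Y) :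
  ymarginal (E i) (@unif_policy R X 'I_10) y = (10%:R)^-1 * \sum_(j < 10) nu j y.
Proof.
rewrite -[RHS](expect_cst _ d0_dist); apply: eq_bigr => x _; congr (_ * _).
transitivity (\sum_(a < 10) (10%:R)^-1 * feedback_law i (a == ell x) y).
  apply: eq_bigr => a _; rewrite /unif_policy card_ord; congr (_ * _).
  by under eq_bigr do rewrite fbk_env; rewrite (rprob_env i x a (feedback_law i ^~ y)).
rewrite -mulr_sumr (sum_actions _ (feedback_law i ^~ y)) /= /mix_others.
by rewrite mulrA mulfV ?pnatr_eq0 // mul1r [in RHS](bigD1 i).
Qed.

Lemma dvalue_det (i : 'I_10) (f : X -> 'I_10) (psi : Y -> R) :
  dvalue (E i) (det_policy R f) psi = \sum_x d0 x * decoded i psi (f x == ell x).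
Proof.
rewrite dvalue_env; apply: eq_bigr => x _; congr (_ * _).
by under eq_bigr do rewrite mulrC; rewrite sum_pointmass.
Qed.

Lemma decoded_argmin (i : 'I_10) (psi : Y -> R) :
  (forall j, nu_mean i psi <= nu_mean j psi) -> decoded i psi true <= decoded i psi false.
Proof.
move=> i_min; rewrite decoded_true decoded_false.
rewrite -[leLHS]mul1r -[1 in leLHS](@mulVf _ 9%:R) ?pnatr_eq0 // -mulrA.
rewrite ler_wpM2l ?invr_ge0 ?ler0n // -(sum_others_const i).
by apply: ler_sum => j _.
Qed.

Lemma wrong_policy_optimal (i : 'I_10) (psi : Y -> R) :
  decoded i psi true <= decoded i psi false ->
  forall pi, is_policy pi ->
    dvalue (E i) pi psi <= dvalue (E i) (det_policy R (wrong_action \o ell)) psi.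
Proof.
move=> true_le pi pi_pol; rewrite dvalue_det.
under eq_bigr do rewrite /= eq_sym wrong_action_neq.
rewrite expect_cst // dvalue_env; apply: expect_le => // x.
by apply: expect_le => // a; case: (a == ell x).
Qed.

Lemma value_wrong (i : 'I_10) : value (E i) (det_policy R (wrong_action \o ell)) = 0.
Proof. by rewrite value_det big1 // => x _; rewrite /= wrong_action_neq mulr0. Qed.

Lemma decoder_failure (psi : Y -> R) :
  exists (i : 'I_10) (pihat : X -> 'I_10 -> R),
    [/\ is_policy pihat,
        (forall pi, is_policy pi -> dvalue (E i) pi psi <= dvalue (E i) pihat psi),
        value (E i) pihat = 0,
        (exists pistar, is_policy pistar /\ value (E i) pistar = 1) &
        (forall pi, is_policy pi -> value (E i) pi <= 1)].
Proof.
have [i _ i_min] := @arg_minP _ R _ ord0 predT (nu_mean ^~ psi) isT.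
exists i, (det_policy R (wrong_action \o ell)); split.
- exact: det_policy_is_policy.
- by apply: wrong_policy_optimal; apply: decoded_argmin => j; apply: i_min.
- exact: value_wrong.
- by exists (det_policy R ell); split; [apply: det_policy_is_policy | apply: value_oracle].
- exact: value_le1.
Qed.

End TenEnvironments.

(* The theorem: take ten equally likely contexts labelled by themselves and
   ten feedback symbols, Y_j = {j} and nu_j the point mass at j. *)
Theorem theorem3 (R : realFieldType) :
  exists (X Y : finType) (d0 : X -> R) (ell : X -> 'I_10)
         (blk : Y -> 'I_10) (nu : 'I_10 -> Y -> R),
  [/\ (* common context distribution, balanced labeling *)
      [/\ is_dist d0,
           (forall j : 'I_10, \sum_(x | ell x == j) d0 x = (10%:R)^-1) &
      (* nu_j is a probability distribution on the block Y_j *)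
           (forall j : 'I_10, is_dist (nu j) /\ (forall y, nu j y != 0 -> blk y = j))],
      (* each E_i is a well-formed IGL environment *)
      (forall i : 'I_10, well_formed (mk_env d0 ell nu i)),
      (* (i) Assumptions 1 and 2 *)
      (forall i : 'I_10, exists Q : bool -> Y -> R,
         assumption1 (mk_env d0 ell nu i) Q /\
         (forall Psi : (Y -> R) -> Prop,
            (forall j : 'I_10, Psi (block_ind R blk j)) ->
            assumption2 (mk_env d0 ell nu i) Q Psi /\
            assumption2_with (mk_env d0 ell nu i) Q Psi (4%:R / 5%:R))),
      (* (ii) same marginal of y under the uniform policy *)
      (forall (i : 'I_10) (y : Y),
         ymarginal (mk_env d0 ell nu i) (@unif_policy R X (ordinal 10)) y
         = (10%:R)^-1 * \sum_(j < 10) nu j y) &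
      (* (iii) every [0,1]-valued decoder fails in some environment *)
      (forall psi : Y -> R, (forall y, 0 <= psi y <= 1) ->
         exists (i : 'I_10) (pihat : X -> 'I_10 -> R),
           [/\ is_policy pihat,
               (forall pi, is_policy pi ->
                  dvalue (mk_env d0 ell nu i) pi psi
                  <= dvalue (mk_env d0 ell nu i) pihat psi),
               value (mk_env d0 ell nu i) pihat = 0,
               (exists pistar, is_policy pistar /\
                  value (mk_env d0 ell nu i) pistar = 1) &
               (forall pi, is_policy pi -> value (mk_env d0 ell nu i) pi <= 1)])].
Proof.
pose d0 : 'I_10 -> R := fun _ => (#|'I_10|%:R)^-1.
pose nu : 'I_10 -> 'I_10 -> R := fun j y => (y == j)%:R.
have d0_dist : is_dist d0 by apply: uniform_dist; rewrite card_ord.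
have nu_dist j : is_dist (nu j) by apply: pointmass_dist.
have nu_block j y : nu j y != 0 -> y = j.
  by rewrite /nu; case: (eqVneq y j) => // _; rewrite eqxx.
exists 'I_10, 'I_10, d0, id, id, nu; split.
- split=> // j; first by rewrite big_pred1_eq /d0 card_ord.
  by split; [apply: nu_dist | apply: nu_block].
- exact: env_well_formed.
- move=> i; exists (feedback_law nu i); split; first exact: env_assumption1.
  move=> Psi Psi_blocks.
  have eta_ok := env_assumption2 d0_dist nu_dist nu_block (Psi_blocks i).
  split=> //; exists (4%:R / 5%:R); split=> //.
  by rewrite divr_gt0 ?ltr0n.
- exact: ymarginal_unif.
- by move=> psi _; apply: decoder_failure.
Qed.
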